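(* Forward-safe and backward-safe pairs are closed under the following constructions: (1) if $(f_1,g_1)$ and $(f_2,g_2)$ are forward-safe (resp. backward-safe) then so is $(f_1\times f_2,g_1\times g_2)$; (2) if each $(f_i,g_i)$ is forward-safe (resp. backward-safe) then so is $(\coprod_i f_i,\coprod_i g_i)$; (3) if $f:X\to Y$, $g:Y\to W$ form a forward-safe (resp. backward-safe) pair then so does $(\mathcal V\times f,\ \theta_W\circ(\mathcal V\times g))$, where $\mathcal V\times f:\mathcal V\times X\to\mathcal V\times Y$ and $\theta_W\circ(\mathcal V\times g):\mathcal V\times Y\to[\mathcal V]W$.
   Context: Nominal sets over a countably infinite set $\mathcal V$ of names; $\theta_W:\mathcal V\times W\to[\mathcal V]W$, $(x,u)\mapsto\langle x\rangle u$, the quotient map onto the name-abstraction. For equivariant $f:X\to Y$: $u$ is $f$-safe if $|\mathsf{supp}(u)|=\max\{|\mathsf{supp}(v)|:v\in f^{-1}(f(u))\}$ (maximum existing); $f$ is safe if every element of $Y$ has an $f$-safe preimage. For safe maps $f:X\to Y$, $g:Y\to W$: $(f,g)$ is forward-safe if for every $(g\circ f)$-safe $u\in X$, $f(u)$ is $g$-safe; $(f,g)$ is backward-safe if every $u\in X$ which is $f$-safe and such that $f(u)$ is $g$-safe is $(g\circ f)$-safe. *)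

(* Nominal sets over the countably infinite set of names
   V := nat, presented via swappings (Gabbay / Pitts). *)
From Stdlib Require Import Arith Lia List FunctionalExtensionality
  PropExtensionality ProofIrrelevance.
Import ListNotations.
Set Implicit Arguments.

Definition nswap (a b c : nat) : nat :=
  if Nat.eqb c a then b else if Nat.eqb c b then a else c.

Definition supports {T : Type} (sw : nat -> nat -> T -> T) (S : list nat) (x : T) : Prop :=
  forall a b, ~ In a S -> ~ In b S -> sw a b x = x.

Record nominal := Nominal {
  ncar :> Type;
  nsw : nat -> nat -> ncar -> ncar;
  nsw_id : forall a x, nsw a a x = x;
  nsw_inv : forall a b x, nsw a b (nsw a b x) = x;
  nsw_sw : forall a b c d x,
      nsw a b (nsw c d x) = nsw (nswap a b c) (nswap a b d) (nsw a b x);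
  nfin : forall x, exists S : list nat, supports nsw S x
}.
Arguments nsw {n} a b x.
Arguments nsw_id {n} a x.
Arguments nsw_inv {n} a b x.
Arguments nsw_sw {n} a b c d x.
Arguments nfin {n} x.

(** [a] is in the support of [x]: it belongs to every finite support of
    [x] (i.e. supp(x) is the least finite support). *)
Definition in_supp {X : nominal} (x : X) (a : nat) : Prop :=
  forall S, supports (@nsw X) S x -> In a S.

Definition supp_size {X : nominal} (x : X) (n : nat) : Prop :=
  exists l : list nat, NoDup l /\ length l = n /\ forall a, In a l <-> in_supp x a.

Definition equivariant {X Y : nominal} (f : X -> Y) : Prop :=
  forall a b x, f (nsw a b x) = nsw a b (f x).

Definition f_safe {X Y : nominal} (f : X -> Y) (u : X) : Prop :=
  exists n, supp_size u n /\
    forall v m, f v = f u -> supp_size v m -> m <= n.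

Definition safe {X Y : nominal} (f : X -> Y) : Prop :=
  equivariant f /\ forall y : Y, exists u : X, f u = y /\ f_safe f u.

Definition forward_safe {X Y W : nominal} (f : X -> Y) (g : Y -> W) : Prop :=
  safe f /\ safe g /\
  forall u : X, f_safe (fun x => g (f x)) u -> f_safe g (f u).

Definition backward_safe {X Y W : nominal} (f : X -> Y) (g : Y -> W) : Prop :=
  safe f /\ safe g /\
  forall u : X, f_safe f u -> f_safe g (f u) -> f_safe (fun x => g (f x)) u.

Lemma nswap_id a c : nswap a a c = c.
Proof. unfold nswap; destruct (Nat.eqb_spec c a); subst; auto. Qed.

Ltac nsolve := unfold nswap;
  repeat match goal with
    | |- context [Nat.eqb ?x ?x] => rewrite Nat.eqb_refl; cbn iota
    | |- context [Nat.eqb ?x ?y] => is_var x; is_var y;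
        destruct (Nat.eqb_spec x y); [subst|]; cbn iota
  end; congruence.

Lemma nswap_inv a b c : nswap a b (nswap a b c) = c.
Proof. nsolve. Qed.

Lemma nswap_sw a b c d e :
  nswap a b (nswap c d e) = nswap (nswap a b c) (nswap a b d) (nswap a b e).
Proof. nsolve. Qed.

Definition names : nominal.
Proof.
  refine (@Nominal nat nswap nswap_id nswap_inv nswap_sw _).
  intro c; exists [c]; intros a b Ha Hb; unfold nswap.
  destruct (Nat.eqb_spec c a) as [->|]; [exfalso; apply Ha; left; auto|].
  destruct (Nat.eqb_spec c b) as [->|]; [exfalso; apply Hb; left; auto|auto].
Defined.

Definition prod_nom (X Y : nominal) : nominal.
Proof.
  refine (@Nominal (X * Y) (fun a b p => (nsw a b (fst p), nsw a b (snd p)))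
            _ _ _ _).
  - intros a [x y]; simpl; rewrite !nsw_id; auto.
  - intros a b [x y]; simpl; rewrite !nsw_inv; auto.
  - intros a b c d [x y]; simpl; f_equal; apply nsw_sw.
  - intros [x y]; destruct (nfin x) as [S1 H1]; destruct (nfin y) as [S2 H2].
    exists (S1 ++ S2); intros a b Ha Hb; simpl.
    rewrite in_app_iff in Ha, Hb.
    rewrite H1, H2; auto; tauto.
Defined.

Definition prod_map {X1 Y1 X2 Y2 : nominal} (f1 : X1 -> Y1) (f2 : X2 -> Y2)
  : prod_nom X1 X2 -> prod_nom Y1 Y2 := fun p => (f1 (fst p), f2 (snd p)).

Definition coprod_nom (I : Type) (X : I -> nominal) : nominal.
Proof.
  refine (@Nominal {i : I & X i} (fun a b p => existT _ (projT1 p) (nsw a b (projT2 p)))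
            _ _ _ _).
  - intros a [i x]; simpl; rewrite nsw_id; auto.
  - intros a b [i x]; simpl; rewrite nsw_inv; auto.
  - intros a b c d [i x]; simpl; f_equal; apply nsw_sw.
  - intros [i x]; destruct (nfin x) as [S H]; exists S; intros a b Ha Hb; simpl.
    rewrite H; auto.
Defined.

Definition coprod_map (I : Type) (X Y : I -> nominal) (f : forall i, X i -> Y i)
  : coprod_nom X -> coprod_nom Y :=
  fun p => existT _ (projT1 p) (f (projT1 p) (projT2 p)).

Arguments coprod_map {I X Y} f p.

Definition quot_nom (X : nominal) (R : X -> X -> Prop)
  (HR : forall a b x y, R x y -> R (nsw a b x) (nsw a b y)) : nominal.
Proof.
  assert (Hsig : forall (p q : {P : X -> Prop | exists x, P = R x}),
             proj1_sig p = proj1_sig q -> p = q).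
  { intros [P HP] [Q HQ]; simpl; intros ->; f_equal; apply proof_irrelevance. }
  assert (Hsw : forall a b (p : {P : X -> Prop | exists x, P = R x}),
             exists x, (fun y => proj1_sig p (nsw a b y)) = R x).
  { intros a b [P [x ->]]; simpl; exists (nsw a b x).
    extensionality y; apply propositional_extensionality; split; intro H.
    - apply HR with (a := a) (b := b) in H; rewrite nsw_inv in H; auto.
    - apply HR with (a := a) (b := b) in H; rewrite nsw_inv in H; auto. }
  refine (@Nominal {P : X -> Prop | exists x, P = R x}
            (fun a b p => exist _ _ (Hsw a b p)) _ _ _ _).
  - intros a p; apply Hsig; simpl; extensionality y; rewrite nsw_id; auto.
  - intros a b p; apply Hsig; simpl; extensionality y; rewrite nsw_inv; auto.
  - intros a b c d p; apply Hsig; simpl; extensionality y.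
    f_equal.
    rewrite <- (nsw_inv a b (nsw c d (nsw a b y))).
    rewrite (nsw_sw a b c d), nsw_inv; auto.
  - intros [P [x ->]]; destruct (nfin x) as [S H]; exists S; intros a b Ha Hb.
    apply Hsig; simpl; extensionality y; apply propositional_extensionality.
    split; intro H'.
    + apply HR with (a := a) (b := b) in H'; rewrite nsw_inv, H in H'; auto.
    + rewrite <- (H a b Ha Hb) in H'.
      apply HR with (a := a) (b := b) in H'; rewrite nsw_inv in H'; auto.
Defined.

Definition quot_map (X : nominal) (R : X -> X -> Prop)
  (HR : forall a b x y, R x y -> R (nsw a b x) (nsw a b y)) : X -> @quot_nom X R HR :=
  fun x => exist _ (R x) (ex_intro _ x eq_refl).

(** Alpha-equivalence on V x W: <a>x = <b>y iff for all but finitely many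
    names c, (a c).x = (b c).y. *)
Definition alpha (W : nominal) (p q : prod_nom names W) : Prop :=
  exists L : list nat, forall c, ~ In c L ->
    nsw (fst p) c (snd p) = nsw (fst q) c (snd q).

Lemma alpha_eqv (W : nominal) :
  forall a b (x y : prod_nom names W), alpha x y -> alpha (nsw a b x) (nsw a b y).
Proof.
  intros a b [a1 x] [b1 y] [L HL]; simpl in *.
  exists (map (nswap a b) L); intros c Hc; simpl.
  assert (Hc' : ~ In (nswap a b c) L).
  { intro Hin; apply Hc; rewrite <- (nswap_inv a b c); apply in_map; auto. }
  pose proof (f_equal (nsw a b) (HL _ Hc')) as E.
  rewrite nsw_sw, (nsw_sw a b b1), nswap_inv in E; exact E.
Qed.

Definition abs_nom (W : nominal) : nominal := @quot_nom (prod_nom names W) (@alpha W) (@alpha_eqv W).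

Definition theta (W : nominal) : prod_nom names W -> abs_nom W :=
  @quot_map (prod_nom names W) (@alpha W) (@alpha_eqv W).

Definition Vx {X Y : nominal} (f : X -> Y) : prod_nom names X -> prod_nom names Y :=
  fun p => (fst p, f (snd p)).

(* The proof rests on one characterisation of safety
   per construction (for equivariant h, h1, h2):
   - (u1,u2) is (h1 x h2)-safe iff each u_i is h_i-safe and every name shared
     by u1 and u2 lies in supp (h1 u1) and in supp (h2 u2);
   - (i,x) is (coprod h)-safe iff x is (h i)-safe;
   - (a,x) is (V x h)-safe iff it is (theta o (V x h))-safe iff x is h-safe
     and a in supp x implies a in supp (h x).
   The "only if" directions rename, inside a fibre, names that do not occur in
   the image to fresh ones. *)

From Stdlib Require Import Arith Lia List FunctionalExtensionality
  PropExtensionality ProofIrrelevance Classical ClassicalEpsilon Eqdep.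
Import ListNotations.
Set Implicit Arguments.
Unset Strict Implicit.

(** * Cardinalities of finite sets of names *)

Lemma fresh (l : list nat) : exists e, ~ In e l.
Proof.
  exists (S (fold_right max 0 l)).
  assert (Hbound : forall a, In a l -> a <= fold_right max 0 l).
  { induction l as [|x l IH]; simpl; intros b Hb; [destruct Hb|].
    destruct Hb as [->|Hb]; [lia|specialize (IH b Hb); lia]. }
  intro Hin; apply Hbound in Hin; lia.
Qed.

Definition card (P : nat -> Prop) (n : nat) : Prop :=
  exists l, NoDup l /\ length l = n /\ forall a, In a l <-> P a.

Definition fin (P : nat -> Prop) : Prop := exists l, forall a, P a -> In a l.

Lemma fin_sub (P Q : nat -> Prop) : fin Q -> (forall a, P a -> Q a) -> fin P.
Proof. intros [l Hl] H; exists l; auto. Qed.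

Lemma fin_union (P Q : nat -> Prop) : fin P -> fin Q -> fin (fun a => P a \/ Q a).
Proof.
  intros [l1 H1] [l2 H2]; exists (l1 ++ l2); intros a [Ha|Ha]; apply in_app_iff; auto.
Qed.

Lemma card_ex (P : nat -> Prop) : fin P -> exists n, card P n.
Proof.
  intros [l Hl].
  assert (Hfilter : exists l', NoDup l' /\ forall a, In a l' <-> In a l /\ P a).
  { clear Hl; induction l as [|x l IH].
    - exists []; split; [constructor|simpl; tauto].
    - destruct IH as [l' [Hnd Hl']].
      destruct (classic (P x /\ ~ In x l')) as [[Hx Hnx]|Hno].
      + exists (x :: l'); split; [constructor; auto|].
        intro a; simpl; rewrite Hl'; split; [intros [->|[]]; auto|].
        intros [[->|H] Ha]; auto.
      + exists l'; split; auto; intro a; rewrite Hl'; simpl; split; [tauto|].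
        intros [[<-|H] Ha]; [|tauto].
        apply NNPP; intro Hn; apply Hno; split; auto.
        intro Hin; apply Hn, Hl'; auto. }
  destruct Hfilter as [l' [Hnd H]].
  exists (length l'), l'; repeat split; auto.
  - intro Ha; apply H in Ha; tauto.
  - intro Ha; apply H; auto.
Qed.

Lemma card_unique (P : nat -> Prop) n m : card P n -> card P m -> n = m.
Proof.
  intros [l1 [N1 [L1 H1]]] [l2 [N2 [L2 H2]]]; subst.
  apply Nat.le_antisymm; apply NoDup_incl_length; auto;
    intros a Ha; [apply H2, H1|apply H1, H2]; auto.
Qed.

Definition cardp (P : nat -> Prop) : nat := epsilon (inhabits 0) (fun n => card P n).

Lemma cardp_spec (P : nat -> Prop) : fin P -> card P (cardp P).
Proof. intro H; unfold cardp; apply epsilon_spec, card_ex, H. Qed.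

Lemma cardp_eq (P : nat -> Prop) n : card P n -> cardp P = n.
Proof.
  intro H; apply (card_unique (P := P)); auto; apply cardp_spec.
  destruct H as [l [_ [_ Hl]]]; exists l; intros a Ha; apply Hl, Ha.
Qed.

Lemma cardp_ext (P Q : nat -> Prop) : (forall a, P a <-> Q a) -> cardp P = cardp Q.
Proof.
  intro H; replace Q with P; auto.
  extensionality a; apply propositional_extensionality; auto.
Qed.

Lemma cardp_mono (P Q : nat -> Prop) : fin Q -> (forall a, P a -> Q a) -> cardp P <= cardp Q.
Proof.
  intros FQ H.
  destruct (cardp_spec FQ) as [l2 [N2 [L2 H2]]].
  destruct (cardp_spec (fin_sub FQ H)) as [l1 [N1 [L1 H1]]].
  rewrite <- L1, <- L2; apply NoDup_incl_length; auto.
  intros a Ha; apply H2, H, H1; auto.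
Qed.

Lemma cardp_disj (P Q : nat -> Prop) : fin P -> fin Q -> (forall a, P a -> Q a -> False) ->
  cardp (fun a => P a \/ Q a) = cardp P + cardp Q.
Proof.
  intros FP FQ D.
  destruct (cardp_spec FP) as [l1 [N1 [L1 H1]]].
  destruct (cardp_spec FQ) as [l2 [N2 [L2 H2]]].
  apply cardp_eq; exists (l1 ++ l2); repeat split.
  - apply NoDup_app; auto; intros a Ha Hb; apply (D a); [apply H1|apply H2]; auto.
  - rewrite length_app; lia.
  - intro Ha; apply in_app_iff in Ha as [Ha|Ha]; [left; apply H1|right; apply H2]; auto.
  - intros [Ha|Ha]; apply in_app_iff; [left; apply H1|right; apply H2]; auto.
Qed.

Lemma cardp_split (P Q : nat -> Prop) : fin P ->
  cardp P = cardp (fun a => P a /\ Q a) + cardp (fun a => P a /\ ~ Q a).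
Proof.
  intro FP; rewrite <- cardp_disj.
  - apply cardp_ext; intro a; destruct (classic (Q a)); tauto.
  - apply (fin_sub FP); tauto.
  - apply (fin_sub FP); tauto.
  - tauto.
Qed.

Lemma cardp_union_inter (A B : nat -> Prop) : fin A -> fin B ->
  cardp (fun a => A a \/ B a) + cardp (fun a => A a /\ B a) = cardp A + cardp B.
Proof.
  intros FA FB.
  rewrite (@cardp_split _ A (fin_union FA FB)), (@cardp_split B A FB).
  rewrite (@cardp_ext (fun a => (A a \/ B a) /\ A a) A) by tauto.
  rewrite (@cardp_ext (fun a => (A a \/ B a) /\ ~ A a) (fun a => B a /\ ~ A a)) by tauto.
  rewrite (@cardp_ext (fun a => A a /\ B a) (fun a => B a /\ A a)) by tauto.
  lia.
Qed.

Lemma cardp_single a : cardp (fun c => c = a) = 1.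
Proof.
  apply cardp_eq; exists [a]; repeat split.
  - constructor; [simpl; tauto|constructor].
  - intros [H|[]]; auto.
  - intros ->; left; auto.
Qed.

Lemma cardp_sub_eq (P Q : nat -> Prop) : fin Q -> (forall a, P a -> Q a) ->
  cardp Q <= cardp P -> forall a, Q a -> P a.
Proof.
  intros FQ H Hle a Qa; apply NNPP; intro nPa.
  rewrite (@cardp_split Q P FQ) in Hle.
  rewrite (@cardp_ext (fun a => Q a /\ P a) P) in Hle by (intro; split; [tauto|auto]).
  assert (1 <= cardp (fun b => Q b /\ ~ P b)).
  { rewrite <- (cardp_single a); apply cardp_mono; [apply (fin_sub FQ); tauto|].
    intros b ->; auto. }
  lia.
Qed.

Lemma cardp_invol (f : nat -> nat) (P : nat -> Prop) : (forall x, f (f x) = x) -> fin P ->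
  cardp (fun c => P (f c)) = cardp P.
Proof.
  intros Hf FP; destruct (cardp_spec FP) as [l [N [L H]]].
  apply cardp_eq; exists (map f l); repeat split.
  - apply NoDup_map_NoDup_ForallPairs; auto.
    intros x y _ _ E; rewrite <- (Hf x), E; auto.
  - rewrite length_map; auto.
  - intro Hi; apply in_map_iff in Hi as [y [<- Hy]]; rewrite Hf; apply H; auto.
  - intro Hc; apply in_map_iff; exists (f a); split; auto; apply H; auto.
Qed.

(** * Swappings and supports *)

Lemma nswap_l a b : nswap a b a = b.
Proof. nsolve. Qed.

Lemma nswap_r a b : nswap a b b = a.
Proof. nsolve. Qed.

Lemma nswap_o a b c : c <> a -> c <> b -> nswap a b c = c.
Proof. intros; unfold nswap; destruct (Nat.eqb_spec c a), (Nat.eqb_spec c b); congruence. Qed.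

Lemma nsw_sym (X : nominal) a b (x : X) : nsw a b x = nsw b a x.
Proof.
  pose proof (nsw_sw a b a b x) as H; rewrite nsw_inv, nswap_l, nswap_r in H.
  rewrite H at 2; rewrite nsw_inv; reflexivity.
Qed.

Lemma nsw_conj (X : nominal) a d e (x : X) : d <> a -> d <> e ->
  nsw a e (nsw d e (nsw a e x)) = nsw d a x.
Proof. intros H1 H2; rewrite nsw_sw, nsw_inv, nswap_r, nswap_o; auto. Qed.

Lemma nin_supp_iff (X : nominal) (x : X) a :
  ~ in_supp x a <-> exists S, supports (@nsw X) S x /\ ~ In a S.
Proof.
  unfold in_supp; split.
  - intro H; apply not_all_ex_not in H as [S HS]; exists S.
    split; [apply NNPP; intro; apply HS; tauto|intro; apply HS; auto].
  - intros [S [HS Ha]] H; apply Ha, H; auto.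
Qed.

Lemma supp_fin (X : nominal) (x : X) : fin (in_supp x).
Proof. destruct (nfin x) as [S HS]; exists S; intros a Ha; apply Ha, HS. Qed.

Lemma fresh_swap (X : nominal) (x : X) a b :
  ~ in_supp x a -> ~ in_supp x b -> nsw a b x = x.
Proof.
  intros Ha Hb; apply nin_supp_iff in Ha as [Sa [Ha1 Ha2]];
    apply nin_supp_iff in Hb as [Sb [Hb1 Hb2]].
  destruct (Nat.eq_dec a b) as [<-|Hab]; [apply nsw_id|].
  destruct (fresh (Sa ++ Sb ++ [a; b])) as [e He].
  rewrite !in_app_iff in He; simpl in He.
  rewrite nsw_sym, <- (@nsw_conj X a b e x) by (intros ->; tauto).
  rewrite (Ha1 a e), (Hb1 b e), (Ha1 a e); tauto.
Qed.

Lemma nin_supp_sw (X : nominal) (x : X) a b c :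
  ~ in_supp x (nswap a b c) -> ~ in_supp (nsw a b x) c.
Proof.
  intro H; apply nin_supp_iff in H as [S [HS Hn]]; apply nin_supp_iff.
  exists (map (nswap a b) S); split.
  - intros d e Hd He.
    assert (Hd' : ~ In (nswap a b d) S)
      by (intro Hi; apply Hd; rewrite <- (nswap_inv a b d); apply in_map; auto).
    assert (He' : ~ In (nswap a b e) S)
      by (intro Hi; apply He; rewrite <- (nswap_inv a b e); apply in_map; auto).
    pose proof (nsw_sw a b (nswap a b d) (nswap a b e) x) as E.
    rewrite !nswap_inv, (HS _ _ Hd' He') in E; auto.
  - intro Hi; apply in_map_iff in Hi as [y [Ey Hy]]; apply Hn.
    rewrite <- Ey, nswap_inv; auto.
Qed.

Lemma supp_sw (X : nominal) (x : X) a b c :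
  in_supp (nsw a b x) c <-> in_supp x (nswap a b c).
Proof.
  split; intro H; apply NNPP; intro H'.
  - apply (@nin_supp_sw X x a b c); auto.
  - apply (@nin_supp_sw X (nsw a b x) a b (nswap a b c)); [rewrite nswap_inv; auto|].
    rewrite nsw_inv; auto.
Qed.

Lemma supp_equiv (X Y : nominal) (f : X -> Y) (x : X) a :
  equivariant f -> in_supp (f x) a -> in_supp x a.
Proof.
  intros E H; apply NNPP; intro H'; apply nin_supp_iff in H' as [S [HS Hn]].
  revert H; apply nin_supp_iff; exists S; split; auto.
  intros c d Hc Hd; rewrite <- E, HS; auto.
Qed.

Lemma comp_equiv (X Y W : nominal) (f : X -> Y) (g : Y -> W) :
  equivariant f -> equivariant g -> equivariant (fun x => g (f x)).
Proof. intros E F a b x; rewrite E, F; auto. Qed.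

(** * Support size and safety *)

Definition sz {X : nominal} (x : X) : nat := cardp (in_supp x).

Lemma sz_sw (X : nominal) (x : X) a b : sz (nsw a b x) = sz x.
Proof.
  unfold sz; rewrite (@cardp_ext (in_supp (nsw a b x)) (fun c => in_supp x (nswap a b c))).
  - apply cardp_invol; [apply nswap_inv|apply supp_fin].
  - intro; apply supp_sw.
Qed.

Lemma supp_size_iff (X : nominal) (x : X) n : supp_size x n <-> n = sz x.
Proof.
  split.
  - intro H; symmetry; apply cardp_eq, H.
  - intros ->; apply cardp_spec, supp_fin.
Qed.

Lemma f_safe_iff (X Y : nominal) (f : X -> Y) u :
  f_safe f u <-> forall v, f v = f u -> sz v <= sz u.
Proof.
  split.
  - intros [n [Hn H]] v Hv; apply supp_size_iff in Hn; subst.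
    apply (H v); auto; apply supp_size_iff; auto.
  - intro H; exists (sz u); split; [apply supp_size_iff; auto|].
    intros v m Hv Hm; apply supp_size_iff in Hm; subst; auto.
Qed.

Lemma f_safe_finer (X Y Z : nominal) (k1 : X -> Y) (k2 : X -> Z) u :
  (forall v, k1 v = k1 u -> k2 v = k2 u) -> f_safe k2 u -> f_safe k1 u.
Proof. rewrite !f_safe_iff; intros H1 H2 v Hv; auto. Qed.

Lemma f_safe_transfer (X Y : nominal) (f : X -> Y) u u' :
  f u' = f u -> sz u' = sz u -> f_safe f u -> f_safe f u'.
Proof. rewrite !f_safe_iff; intros E S H v Hv; rewrite S; apply H; congruence. Qed.

(* Renaming inside a fibre: any x can be replaced, without changing h x or
   |supp x|, by an x' whose support meets the finite set L only inside
   supp (h x).  Each bad name c in L is swapped with a fresh name. *)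
Lemma rename (X Y : nominal) (h : X -> Y) : equivariant h -> forall (L : list nat) (x : X),
  exists x', h x' = h x /\ sz x' = sz x /\
    forall a, in_supp x' a -> In a L -> in_supp (h x) a.
Proof.
  intros E L; induction L as [|c L IH]; intro x.
  - exists x; repeat split; auto; intros a _ [].
  - destruct (IH x) as [x1 [H1 [H2 H3]]].
    destruct (classic (in_supp x1 c /\ ~ in_supp (h x) c)) as [[Hc Hnc]|Hok].
    + destruct (supp_fin x1) as [S HS].
      destruct (fresh (S ++ c :: L)) as [e He]; rewrite in_app_iff in He; simpl in He.
      assert (Hne : ~ in_supp x1 e) by (intro Hi; apply HS in Hi; tauto).
      exists (nsw c e x1); repeat split.
      * rewrite E, H1, fresh_swap; auto.
        intro Hi; apply Hne, (supp_equiv E); rewrite H1; auto.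
      * rewrite sz_sw; auto.
      * intros a Ha Hin; apply supp_sw in Ha.
        destruct (Nat.eq_dec a c) as [->|Hac]; [rewrite nswap_l in Ha; tauto|].
        destruct Hin as [->|Hin]; [tauto|].
        rewrite nswap_o in Ha by (intros ->; tauto); apply H3; auto.
    + exists x1; repeat split; auto.
      intros a Ha [<-|Hin]; [|apply H3; auto].
      apply NNPP; intro; apply Hok; auto.
Qed.

(** * Products *)

Lemma supp_pair (X Y : nominal) (x : X) (y : Y) a :
  @in_supp (prod_nom X Y) (x, y) a <-> in_supp x a \/ in_supp y a.
Proof.
  split.
  - intro H; apply NNPP; intro Hn.
    assert (Hx : ~ in_supp x a) by tauto; assert (Hy : ~ in_supp y a) by tauto.
    apply nin_supp_iff in Hx as [Sx [Hx1 Hx2]]; apply nin_supp_iff in Hy as [Sy [Hy1 Hy2]].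
    enough (In a (Sx ++ Sy)) by (rewrite in_app_iff in *; tauto).
    apply H; intros c d Hc Hd; rewrite in_app_iff in Hc, Hd; simpl.
    rewrite Hx1, Hy1; tauto.
  - intros [H|H] S HS; apply H; intros c d Hc Hd; pose proof (HS c d Hc Hd) as E;
      simpl in E; injection E; auto.
Qed.

Definition shared (X Y : nominal) (x : X) (y : Y) (a : nat) : Prop :=
  in_supp x a /\ in_supp y a.

Lemma shared_fin (X Y : nominal) (x : X) (y : Y) : fin (shared x y).
Proof. apply (fin_sub (supp_fin x)); intros a [Ha _]; exact Ha. Qed.

Lemma sz_pair (X Y : nominal) (x : X) (y : Y) :
  @sz (prod_nom X Y) (x, y) + cardp (shared x y) = sz x + sz y.
Proof.
  unfold sz at 1; rewrite (@cardp_ext _ (fun a => in_supp x a \/ in_supp y a)) by apply supp_pair.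
  apply cardp_union_inter; apply supp_fin.
Qed.

Lemma sz_pair_comm (X Y : nominal) (x : X) (y : Y) :
  @sz (prod_nom X Y) (x, y) = @sz (prod_nom Y X) (y, x).
Proof. unfold sz; apply cardp_ext; intro a; rewrite !supp_pair; tauto. Qed.

Lemma prod_map_eq (X1 Y1 X2 Y2 : nominal) (h1 : X1 -> Y1) (h2 : X2 -> Y2) v1 v2 u1 u2 :
  @prod_map X1 Y1 X2 Y2 h1 h2 (v1, v2) = prod_map h1 h2 (u1, u2) <->
  h1 v1 = h1 u1 /\ h2 v2 = h2 u2.
Proof.
  unfold prod_map; simpl; split; [intro E; injection E; auto|intros [-> ->]; auto].
Qed.

Lemma prod_equiv (X1 Y1 X2 Y2 : nominal) (h1 : X1 -> Y1) (h2 : X2 -> Y2) :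
  equivariant h1 -> equivariant h2 -> equivariant (@prod_map X1 Y1 X2 Y2 h1 h2).
Proof. intros E1 E2 a b [x y]; unfold prod_map; simpl; rewrite E1, E2; auto. Qed.

Section ProductSafety.
Variables X1 Y1 X2 Y2 : nominal.
Variables (h1 : X1 -> Y1) (h2 : X2 -> Y2).

Lemma prod_safe_swap u1 u2 :
  f_safe (prod_map h1 h2) (u1, u2) -> f_safe (prod_map h2 h1) (u2, u1).
Proof.
  rewrite !f_safe_iff; intros H [v2 v1] Hv; apply prod_map_eq in Hv as [Hv2 Hv1].
  rewrite (sz_pair_comm v2 v1), (sz_pair_comm u2 u1); apply H, prod_map_eq; auto.
Qed.

Hypothesis E1 : equivariant h1.

(* Key estimate: compare (u1,u2) with (v1',u2), where v1' is v1 renamed so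
   that it shares with u2 only names of h1 u1. *)
Lemma prod_safe_bound u1 u2 v1 :
  f_safe (prod_map h1 h2) (u1, u2) -> h1 v1 = h1 u1 ->
  sz v1 + cardp (shared u1 u2) <= sz u1 + cardp (shared (h1 u1) u2).
Proof.
  intros Hs Hv; destruct (supp_fin u2) as [L HL].
  destruct (rename E1 L v1) as [v1' [R1 [R2 R3]]].
  assert (Hle : @sz (prod_nom _ _) (v1', u2) <= @sz (prod_nom _ _) (u1, u2)).
  { rewrite f_safe_iff in Hs; apply Hs, prod_map_eq; split; congruence. }
  assert (Hshared : cardp (shared v1' u2) <= cardp (shared (h1 u1) u2)).
  { apply cardp_mono; [apply shared_fin|].
    intros a [Ha1 Ha2]; split; auto; rewrite <- Hv; apply R3; auto. }
  pose proof (sz_pair v1' u2); pose proof (sz_pair u1 u2); lia.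
Qed.

Lemma prod_safe_left u1 u2 :
  f_safe (prod_map h1 h2) (u1, u2) ->
  f_safe h1 u1 /\ (forall a, in_supp u1 a -> in_supp u2 a -> in_supp (h1 u1) a).
Proof.
  intro Hs.
  assert (Hsub : forall a, shared (h1 u1) u2 a -> shared u1 u2 a)
    by (intros a [Ha1 Ha2]; split; auto; apply (supp_equiv E1 Ha1)).
  assert (Hle : cardp (shared (h1 u1) u2) <= cardp (shared u1 u2))
    by (apply cardp_mono; [apply shared_fin|exact Hsub]).
  split.
  - apply f_safe_iff; intros v1 Hv; pose proof (prod_safe_bound Hs Hv); lia.
  - intros a Ha1 Ha2.
    pose proof (prod_safe_bound (v1 := u1) Hs eq_refl) as Hbound.
    refine (proj1 (cardp_sub_eq (shared_fin u1 u2) Hsub _ (conj Ha1 Ha2))); lia.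
Qed.

End ProductSafety.

Lemma prod_safe_iff (X1 Y1 X2 Y2 : nominal) (h1 : X1 -> Y1) (h2 : X2 -> Y2) u1 u2 :
  equivariant h1 -> equivariant h2 ->
  (f_safe (prod_map h1 h2) (u1, u2) <->
   f_safe h1 u1 /\ f_safe h2 u2 /\
   (forall a, in_supp u1 a -> in_supp u2 a -> in_supp (h1 u1) a /\ in_supp (h2 u2) a)).
Proof.
  intros E1 E2; split.
  - intro Hs.
    destruct (prod_safe_left E1 Hs) as [S1 C1].
    destruct (prod_safe_left E2 (prod_safe_swap Hs)) as [S2 C2].
    split; [exact S1|split; [exact S2|]].
    intros a Ha1 Ha2; split; [apply C1|apply C2]; auto.
  - intros [H1 [H2 D]]; rewrite f_safe_iff in H1, H2 |- *.
    intros [v1 v2] Hv; apply prod_map_eq in Hv as [Hv1 Hv2].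
    assert (cardp (shared u1 u2) <= cardp (shared v1 v2)).
    { apply cardp_mono; [apply shared_fin|].
      intros a [Ha1 Ha2]; destruct (D a Ha1 Ha2) as [D1 D2]; split.
      - apply (supp_equiv E1); rewrite Hv1; auto.
      - apply (supp_equiv E2); rewrite Hv2; auto. }
    pose proof (sz_pair v1 v2); pose proof (sz_pair u1 u2).
    specialize (H1 v1 Hv1); specialize (H2 v2 Hv2); lia.
Qed.

(* A product of safe maps is safe: choose safe preimages and rename each one
   so that every name it shares with the other lies in the images. *)
Lemma prod_safe (X1 Y1 X2 Y2 : nominal) (h1 : X1 -> Y1) (h2 : X2 -> Y2) :
  safe h1 -> safe h2 -> safe (prod_map h1 h2).
Proof.
  intros [E1 S1] [E2 S2]; split; [apply prod_equiv; auto|].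
  intros [y1 y2].
  destruct (S1 y1) as [u1 [U1 F1]], (S2 y2) as [u2 [U2 F2]].
  destruct (supp_fin u2) as [L1 HL1].
  destruct (rename E1 L1 u1) as [u1' [R1 [R2 R3]]].
  destruct (supp_fin u1') as [L2 HL2].
  destruct (rename E2 L2 u2) as [u2' [Q1 [Q2 Q3]]].
  exists (u1', u2'); split; [unfold prod_map; simpl; congruence|].
  apply prod_safe_iff; auto.
  split; [apply (f_safe_transfer R1 R2 F1)|split; [apply (f_safe_transfer Q1 Q2 F2)|]].
  intros a Ha1 Ha2.
  assert (T2 : in_supp (h2 u2) a) by (apply Q3; auto).
  rewrite R1, Q1; split; auto.
  apply R3; auto; apply HL1, (supp_equiv E2 T2).
Qed.

Lemma prod_forward_safe (X1 Y1 W1 X2 Y2 W2 : nominal)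
  (f1 : X1 -> Y1) (g1 : Y1 -> W1) (f2 : X2 -> Y2) (g2 : Y2 -> W2) :
  forward_safe f1 g1 -> forward_safe f2 g2 ->
  forward_safe (prod_map f1 f2) (prod_map g1 g2).
Proof.
  intros [[Ef1 Sf1] [[Eg1 Sg1] H1]] [[Ef2 Sf2] [[Eg2 Sg2] H2]].
  split; [apply prod_safe; split; auto|split; [apply prod_safe; split; auto|]].
  intros [u1 u2] Hu.
  apply (prod_safe_iff (h1 := fun x => g1 (f1 x)) (h2 := fun x => g2 (f2 x)))
    in Hu as [A1 [A2 D]]; try apply comp_equiv; auto.
  apply (prod_safe_iff (f1 u1) (f2 u2) Eg1 Eg2); split; [|split]; auto.
  intros a Ha1 Ha2; apply D; [apply (supp_equiv Ef1 Ha1)|apply (supp_equiv Ef2 Ha2)].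
Qed.

Lemma prod_backward_safe (X1 Y1 W1 X2 Y2 W2 : nominal)
  (f1 : X1 -> Y1) (g1 : Y1 -> W1) (f2 : X2 -> Y2) (g2 : Y2 -> W2) :
  backward_safe f1 g1 -> backward_safe f2 g2 ->
  backward_safe (prod_map f1 f2) (prod_map g1 g2).
Proof.
  intros [[Ef1 Sf1] [[Eg1 Sg1] H1]] [[Ef2 Sf2] [[Eg2 Sg2] H2]].
  split; [apply prod_safe; split; auto|split; [apply prod_safe; split; auto|]].
  intros [u1 u2] Hu Hv.
  apply (prod_safe_iff u1 u2 Ef1 Ef2) in Hu as [A1 [A2 D]].
  apply (prod_safe_iff (f1 u1) (f2 u2) Eg1 Eg2) in Hv as [B1 [B2 D']].
  apply (prod_safe_iff (h1 := fun x => g1 (f1 x)) (h2 := fun x => g2 (f2 x)));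
    try apply comp_equiv; auto.
  split; [|split]; auto.
  intros a Ha1 Ha2; destruct (D a Ha1 Ha2); apply D'; auto.
Qed.

(** * Coproducts *)

Lemma supports_existT (I : Type) (X : I -> nominal) i (x : X i) S :
  supports (@nsw (coprod_nom X)) S (existT _ i x) <-> supports (@nsw (X i)) S x.
Proof.
  split; intros H c d Hc Hd.
  - pose proof (H c d Hc Hd) as E; simpl in E; apply inj_pair2 in E; auto.
  - simpl; rewrite H; auto.
Qed.

Lemma sz_existT (I : Type) (X : I -> nominal) i (x : X i) :
  @sz (coprod_nom X) (existT _ i x) = sz x.
Proof.
  unfold sz; apply cardp_ext; intro a; unfold in_supp.
  split; intros H S HS; apply H, supports_existT, HS.
Qed.

(* Fibres of a coproduct map stay inside one summand. *)
Lemma coprod_safe_iff (I : Type) (X Z : I -> nominal) (F : forall i, X i -> Z i) i (x : X i) :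
  f_safe (coprod_map F) (existT _ i x) <-> f_safe (F i) x.
Proof.
  rewrite !f_safe_iff; split.
  - intros H v Hv; specialize (H (existT _ i v)); rewrite !sz_existT in H; apply H.
    unfold coprod_map; simpl; rewrite Hv; auto.
  - intros H [j v] Hv; unfold coprod_map in Hv; simpl in Hv.
    assert (j = i) by (apply (f_equal (@projT1 _ _)) in Hv; auto); subst j.
    apply inj_pair2 in Hv; rewrite !sz_existT; auto.
Qed.

Lemma coprod_safe (I : Type) (X Z : I -> nominal) (F : forall i, X i -> Z i) :
  (forall i, safe (F i)) -> safe (coprod_map F).
Proof.
  intro S; split.
  - intros a b [i x]; unfold coprod_map; simpl; rewrite (proj1 (S i)); auto.
  - intros [i y]; destruct (proj2 (S i) y) as [u [U1 U2]].
    exists (existT _ i u); split; [unfold coprod_map; simpl; rewrite U1; auto|].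
    apply coprod_safe_iff; auto.
Qed.

Lemma coprod_forward_safe (I : Type) (X Y W : I -> nominal)
  (f : forall i, X i -> Y i) (g : forall i, Y i -> W i) :
  (forall i, forward_safe (f i) (g i)) -> forward_safe (coprod_map f) (coprod_map g).
Proof.
  intro H; split; [apply coprod_safe; apply H|split; [apply coprod_safe; apply H|]].
  intros [i x] Hu.
  apply (coprod_safe_iff (fun i x => g i (f i x))) in Hu.
  apply (coprod_safe_iff g (f i x)), H, Hu.
Qed.

Lemma coprod_backward_safe (I : Type) (X Y W : I -> nominal)
  (f : forall i, X i -> Y i) (g : forall i, Y i -> W i) :
  (forall i, backward_safe (f i) (g i)) -> backward_safe (coprod_map f) (coprod_map g).
Proof.
  intro H; split; [apply coprod_safe; apply H|split; [apply coprod_safe; apply H|]].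
  intros [i x] Hu Hv.
  apply coprod_safe_iff in Hu; apply (coprod_safe_iff g (f i x)) in Hv.
  apply (coprod_safe_iff (fun i x => g i (f i x))), H; auto.
Qed.

(** * Name abstraction *)

Lemma supp_name (a c : nat) : @in_supp names a c <-> c = a.
Proof.
  split.
  - intro H.
    assert (Hs : supports (@nsw names) [a] a).
    { intros b d Hb Hd; simpl; apply nswap_o; intros ->; simpl in *; tauto. }
    destruct (H _ Hs) as [->|[]]; auto.
  - intros -> S HS; apply NNPP; intro Hn.
    destruct (fresh (a :: S)) as [b Hb]; simpl in Hb.
    pose proof (HS a b Hn (fun H => Hb (or_intror H))) as E; simpl in E.
    rewrite nswap_l in E; apply Hb; left; auto.
Qed.

Lemma supp_Vpair (X : nominal) a (x : X) c :
  @in_supp (prod_nom names X) (a, x) c <-> c = a \/ in_supp x c.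
Proof. rewrite supp_pair, supp_name; tauto. Qed.

Lemma sz_Vpair_in (X : nominal) a (x : X) :
  in_supp x a -> @sz (prod_nom names X) (a, x) = sz x.
Proof.
  intro H; unfold sz; apply cardp_ext; intro c; rewrite supp_Vpair.
  split; [intros [->|]|]; auto.
Qed.

Lemma sz_Vpair_out (X : nominal) a (x : X) :
  ~ in_supp x a -> @sz (prod_nom names X) (a, x) = S (sz x).
Proof.
  intro H; unfold sz.
  rewrite (@cardp_ext _ (fun c => c = a \/ in_supp x c)) by apply supp_Vpair.
  rewrite cardp_disj, cardp_single; auto.
  - exists [a]; intros b ->; left; auto.
  - apply supp_fin.
  - intros b -> Hb; auto.
Qed.

Lemma sz_Vpair_le (X : nominal) a (x : X) : @sz (prod_nom names X) (a, x) <= S (sz x).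
Proof.
  destruct (classic (in_supp x a)); [rewrite sz_Vpair_in|rewrite sz_Vpair_out]; auto.
Qed.

(* Necessary conditions for the safety of (a,x) under any map k whose fibres
   are unions of fibres of V x h; this covers both V x h and theta o (V x h). *)
Section AbstractionNecessary.
Variables (X W Z : nominal) (h : X -> W) (k : prod_nom names X -> Z).
Hypothesis E : equivariant h.
Hypothesis K : forall p q, Vx h p = Vx h q -> k p = k q.

(* Compare x' with its renaming x'' that contains a only if h x does. *)
Lemma abs_safe_component a x : f_safe k (a, x) -> f_safe h x.
Proof.
  rewrite !f_safe_iff; intros Hs x' Hx'.
  destruct (rename E [a] x') as [x'' [R1 [R2 R3]]].
  assert (Hk : k (a, x'') = k (a, x)) by (apply K; unfold Vx; simpl; congruence).
  specialize (Hs _ Hk); rewrite <- R2.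
  destruct (classic (in_supp x'' a)) as [Ha|Ha].
  - assert (Hxa : in_supp x a).
    { apply (supp_equiv E); rewrite <- Hx'; apply R3; [auto|left; auto]. }
    rewrite !sz_Vpair_in in Hs; auto.
  - rewrite sz_Vpair_out in Hs by auto; pose proof (sz_Vpair_le a x); lia.
Qed.

(* If a were lost by h, renaming a away in x would enlarge the support of (a,x). *)
Lemma abs_safe_keeps_name a x : f_safe k (a, x) -> in_supp x a -> in_supp (h x) a.
Proof.
  intros Hs Ha; apply NNPP; intro Hn.
  destruct (rename E [a] x) as [x'' [R1 [R2 R3]]].
  assert (Hna : ~ in_supp x'' a) by (intro H; apply Hn, R3; [auto|left; auto]).
  assert (Hk : k (a, x'') = k (a, x)) by (apply K; unfold Vx; simpl; congruence).
  rewrite f_safe_iff in Hs; specialize (Hs _ Hk).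
  rewrite sz_Vpair_out, sz_Vpair_in in Hs; auto; lia.
Qed.

End AbstractionNecessary.

Lemma theta_alpha (W : nominal) (p q : prod_nom names W) : theta p = theta q -> alpha p q.
Proof.
  intro Eq; apply (f_equal (@proj1_sig _ _)) in Eq; simpl in Eq.
  rewrite Eq; exists []; auto.
Qed.

(* Sufficient condition for theta o (V x h): if <b>h x' = <a>h x then, after
   a fresh renaming, x' lies in the fibre of h through x. *)
Lemma abs_safe_of (X W : nominal) (h : X -> W) a (x : X) :
  equivariant h -> f_safe h x -> (in_supp x a -> in_supp (h x) a) ->
  f_safe (fun p => theta (Vx h p)) (a, x).
Proof.
  intros E Hs Keep; rewrite f_safe_iff in Hs |- *.
  intros [b x'] Hv; apply theta_alpha in Hv as [L HL]; simpl in HL.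
  destruct (fresh L) as [c Hc]; specialize (HL c Hc).
  assert (Hh : h (nsw a c (nsw b c x')) = h x) by (rewrite !E, HL, nsw_inv; auto).
  specialize (Hs _ Hh); rewrite !sz_sw in Hs.
  destruct (classic (in_supp x a)) as [Ha|Ha].
  - assert (Hb : in_supp x' b).
    { apply (supp_equiv E).
      assert (Hc' : in_supp (nsw a c (h x)) c) by (rewrite supp_sw, nswap_r; auto).
      rewrite <- HL, supp_sw, nswap_r in Hc'; auto. }
    rewrite (sz_Vpair_in Ha); etransitivity; [apply Nat.eq_le_incl, sz_Vpair_in, Hb|auto].
  - rewrite (sz_Vpair_out Ha); pose proof (sz_Vpair_le b x'); lia.
Qed.

Lemma abs_safe_iff (X W : nominal) (h : X -> W) a (x : X) : equivariant h ->
  (f_safe (fun p => theta (Vx h p)) (a, x) <->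
   f_safe h x /\ (in_supp x a -> in_supp (h x) a)).
Proof.
  intro E; split.
  - assert (K : forall p q, Vx h p = Vx h q -> theta (Vx h p) = theta (Vx h q))
      by (intros p q ->; auto).
    intro Hs; split; [apply (abs_safe_component E K Hs)|apply (abs_safe_keeps_name E K Hs)].
  - intros [Hs Keep]; apply abs_safe_of; auto.
Qed.

(* V x h has finer fibres than theta o (V x h), hence the same safe elements. *)
Lemma Vx_safe_iff (X W : nominal) (h : X -> W) a (x : X) : equivariant h ->
  (f_safe (Vx h) (a, x) <-> f_safe h x /\ (in_supp x a -> in_supp (h x) a)).
Proof.
  intro E; split.
  - intro Hs; split; [apply (abs_safe_component E (fun p q H => H) Hs)|].
    apply (abs_safe_keeps_name E (fun p q H => H) Hs).
  - intro H; apply (f_safe_finer (k2 := fun p => theta (Vx h p))).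
    + intros v ->; auto.
    + apply abs_safe_iff; auto.
Qed.

Lemma Vx_equiv (X Y : nominal) (h : X -> Y) : equivariant h -> equivariant (Vx h).
Proof. intros E a b [c x]; unfold Vx; simpl; rewrite E; auto. Qed.

Lemma theta_equiv (W : nominal) : equivariant (@theta W).
Proof.
  intros a b p; apply subset_eq_compat.
  extensionality y; apply propositional_extensionality; split; intro H;
    apply (alpha_eqv a b) in H; rewrite nsw_inv in H; auto.
Qed.

Lemma safe_preimage_keeping (Y W : nominal) (h : Y -> W) : safe h ->
  forall a w, exists y, h y = w /\ f_safe h y /\ (in_supp y a -> in_supp w a).
Proof.
  intros [E S] a w; destruct (S w) as [y0 [Y0 F0]].
  destruct (rename E [a] y0) as [y [R1 [R2 R3]]].
  exists y; split; [congruence|split; [apply (f_safe_transfer R1 R2 F0)|]].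
  intro Ha; rewrite <- Y0; apply R3; [auto|left; auto].
Qed.

Lemma Vx_safe (X Y : nominal) (h : X -> Y) : safe h -> safe (Vx h).
Proof.
  intro Sh; split; [apply Vx_equiv, Sh|].
  intros [a w]; destruct (safe_preimage_keeping Sh a w) as [y [Y1 [Y2 Y3]]].
  exists (a, y); split; [unfold Vx; simpl; rewrite Y1; auto|].
  apply Vx_safe_iff; [apply Sh|]; split; auto; rewrite Y1; auto.
Qed.

Lemma abs_safe (X W : nominal) (h : X -> W) : safe h -> safe (fun p => theta (Vx h p)).
Proof.
  intro Sh; split.
  - intros a b p; rewrite (Vx_equiv (proj1 Sh)), theta_equiv; auto.
  - intros [P [[a w] ->]].
    destruct (safe_preimage_keeping Sh a w) as [y [Y1 [Y2 Y3]]].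
    exists (a, y); split.
    + apply subset_eq_compat; unfold Vx; simpl; rewrite Y1; auto.
    + apply abs_safe_iff; [apply Sh|]; split; auto; rewrite Y1; auto.
Qed.

Lemma abs_forward_safe (X Y W : nominal) (f : X -> Y) (g : Y -> W) :
  forward_safe f g -> forward_safe (Vx f) (fun p => theta (Vx g p)).
Proof.
  intros [Sf [Sg H]]; split; [apply Vx_safe; auto|split; [apply abs_safe; auto|]].
  intros [a x] Hu.
  apply (abs_safe_iff (h := fun x => g (f x))) in Hu as [A Keep];
    [|apply comp_equiv; [apply Sf|apply Sg]].
  apply (abs_safe_iff a (f x) (proj1 Sg)); split; auto.
  intro Ha; apply Keep, (supp_equiv (proj1 Sf) Ha).
Qed.

Lemma abs_backward_safe (X Y W : nominal) (f : X -> Y) (g : Y -> W) :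
  backward_safe f g -> backward_safe (Vx f) (fun p => theta (Vx g p)).
Proof.
  intros [Sf [Sg H]]; split; [apply Vx_safe; auto|split; [apply abs_safe; auto|]].
  intros [a x] Hu Hv.
  apply (Vx_safe_iff a x (proj1 Sf)) in Hu as [A1 Keep1].
  apply (abs_safe_iff a (f x) (proj1 Sg)) in Hv as [A2 Keep2].
  apply (abs_safe_iff (h := fun x => g (f x))); [apply comp_equiv; [apply Sf|apply Sg]|].
  split; auto.
Qed.

Theorem lemma5p42 :
  (* (1) products *)
  (forall (X1 Y1 W1 X2 Y2 W2 : nominal)
     (f1 : X1 -> Y1) (g1 : Y1 -> W1) (f2 : X2 -> Y2) (g2 : Y2 -> W2),
     forward_safe f1 g1 -> forward_safe f2 g2 ->
     forward_safe (prod_map f1 f2) (prod_map g1 g2)) /\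
  (forall (X1 Y1 W1 X2 Y2 W2 : nominal)
     (f1 : X1 -> Y1) (g1 : Y1 -> W1) (f2 : X2 -> Y2) (g2 : Y2 -> W2),
     backward_safe f1 g1 -> backward_safe f2 g2 ->
     backward_safe (prod_map f1 f2) (prod_map g1 g2)) /\
  (* (2) coproducts *)
  (forall (I : Type) (X Y W : I -> nominal)
     (f : forall i, X i -> Y i) (g : forall i, Y i -> W i),
     (forall i, forward_safe (f i) (g i)) ->
     forward_safe (coprod_map f) (coprod_map g)) /\
  (forall (I : Type) (X Y W : I -> nominal)
     (f : forall i, X i -> Y i) (g : forall i, Y i -> W i),
     (forall i, backward_safe (f i) (g i)) ->
     backward_safe (coprod_map f) (coprod_map g)) /\
  (* (3) V x f and theta_W o (V x g) *)
  (forall (X Y W : nominal) (f : X -> Y) (g : Y -> W),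
     forward_safe f g ->
     forward_safe (Vx f) (fun p => @theta W (Vx g p))) /\
  (forall (X Y W : nominal) (f : X -> Y) (g : Y -> W),
     backward_safe f g ->
     backward_safe (Vx f) (fun p => @theta W (Vx g p))).
Proof.
  split; [exact prod_forward_safe|].
  split; [exact prod_backward_safe|].
  split; [exact coprod_forward_safe|].
  split; [exact coprod_backward_safe|].
  split; [exact abs_forward_safe|exact abs_backward_safe].
Qed.
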